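(* For $\mu_\ast\in\mathbb{R}$ and $b_\ast\in\mathbb{R}$ consider the equation $1-\mu_\ast ze^{b_\ast(1-z)}=0$ in $z\in\mathbb{C}$, and define $$I(\mu_\ast):=\{b_\ast\in\mathbb{R}\mid\text{all solutions }z\text{ of }1-\mu_\ast ze^{b_\ast(1-z)}=0\text{ lie strictly outside the unit circle}\}.$$ Then: (1) if $-e^2<\mu_\ast<-1$, the set $I(\mu_\ast)$ is a non-empty open interval with $I(\mu_\ast)\subseteq(-\infty,0)$; (2) if $-e^2<\mu_{\ast,1}<\mu_{\ast,2}<-1$, then $I(\mu_{\ast,1})\subseteq I(\mu_{\ast,2})$. *)

From Stdlib Require Import Reals.
From Coquelicot Require Import Coquelicot.
Open Scope R_scope.

Definition Cexp (z : C) : C :=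
  (exp (Re z) * cos (Im z), exp (Re z) * sin (Im z)).

Definition charfun (mu b : R) (z : C) : C :=
  Cminus 1 (Cmult (Cmult (RtoC mu) z) (Cexp (Cmult (RtoC b) (Cminus 1 z)))).

Definition Iset (mu : R) (b : R) : Prop :=
  forall z : C, charfun mu b z = 0 -> Cmod z > 1.

Definition nonempty_open_interval (S : R -> Prop) : Prop :=
  exists a c : Rbar, Rbar_lt a c /\
    forall x : R, S x <-> (Rbar_lt a x /\ Rbar_lt x c).

From Stdlib Require Import Reals Lra Lia ZArith Ranalysis5.
From Coquelicot Require Import Coquelicot.
Open Scope R_scope.

(** Write [mu = - exp L] with [0 < L < 2].  A root [z = - r e^(i theta)] of
    [1 - mu z e^(b (1 - z))] satisfies [theta = - b r sin theta] and
    [L + ln r + b (1 + r cos theta) = 0].  Let [tau] in [(0, PI)] solve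
    [tau (1 + cos tau) = L sin tau].  Then [I(mu) = (- tau / sin tau, - L / 2)]:
    for [b >= - L / 2] there is a real root in [[-1, 0)], for
    [b <= - tau / sin tau] an intermediate value argument yields a non-real root
    in the closed unit disc, and in between the two equations are incompatible
    with [r <= 1] because [x / sin x] increases and [x (1 + cos x) / sin x]
    decreases on [(0, PI)].  As [mu] increases, [L] decreases and [tau]
    increases, so the intervals are nested. *)

Lemma cos_sqr_add_sin_sqr θ : cos θ * cos θ + sin θ * sin θ = 1.
Proof. rewrite <- (sin2_cos2 θ); unfold Rsqr; ring. Qed.

Lemma sin_gt_0_lt_PI x : 0 < x < PI -> 0 < sin x.
Proof. intros Hx; apply sin_gt_0; lra. Qed.

Lemma sin_pos_reduce w : 0 < w -> 0 < sin w ->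
  exists t, 0 < t < PI /\ t <= w /\ sin t = sin w /\ cos t = cos w.
Proof.
  intros Hw Hs. pose proof PI_RGT_0.
  set (q := w / (2 * PI)).
  destruct (base_Int_part q) as [Hq1 Hq2].
  assert (Hq : 0 <= q)
    by (unfold q; apply Rmult_le_pos; [lra | left; apply Rinv_0_lt_compat; lra]).
  assert (Hk : (-1 < Int_part q)%Z) by (apply lt_IZR; lra).
  set (k := Z.to_nat (Int_part q)).
  assert (Hkq : INR k = IZR (Int_part q))
    by (unfold k; rewrite INR_IZR_INZ, Z2Nat.id; [reflexivity | lia]).
  set (t := w - 2 * INR k * PI).
  assert (Hw_t : w = t + 2 * INR k * PI) by (unfold t; ring).
  assert (Hwq : w = q * (2 * PI)) by (unfold q; field; lra).
  assert (Ht : 0 <= t < 2 * PI) by (unfold t; rewrite Hkq, Hwq; nra).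
  assert (Hst : sin t = sin w) by (rewrite Hw_t, sin_period; reflexivity).
  exists t. repeat split.
  - destruct (Req_dec t 0) as [Ht0 | ]; [| lra].
    rewrite Ht0, sin_0 in Hst. lra.
  - destruct (Rlt_or_le t PI) as [| HtPI]; [assumption |].
    pose proof (sin_le_0 t HtPI ltac:(lra)). lra.
  - unfold t. pose proof (pos_INR k). nra.
  - exact Hst.
  - rewrite Hw_t, cos_period. reflexivity.
Qed.

Lemma cos_ge_1_sub_sqr_half x : 0 <= x <= 1 -> 1 - x ^ 2 / 2 <= cos x.
Proof.
  intros Hx.
  replace (cos x) with (cos (2 * (x / 2))) by (f_equal; field). rewrite cos_2a_sin.
  destruct (Req_dec x 0) as [-> | Hx0].
  - replace (0 / 2) with 0 by field. rewrite sin_0. lra.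
  - assert (sin (x / 2) < x / 2) by (apply sin_lt_x; lra).
    assert (0 < sin (x / 2)) by (apply sin_gt_0; pose proof PI2_3_2; lra).
    nra.
Qed.

Lemma ln_le_sub_1 x : 0 < x -> ln x <= x - 1.
Proof. intros Hx. pose proof (exp_ineq1_le (ln x)) as H. rewrite exp_ln in H; lra. Qed.

Lemma plus_ln_le_compat x y : 0 < x -> x <= y -> x + ln x <= y + ln y.
Proof.
  intros Hx [Hxy | ->]; [| lra].
  pose proof (ln_increasing x y Hx Hxy). lra.
Qed.

Lemma plus_ln_le_reg x y : 0 < x -> 0 < y -> x + ln x <= y + ln y -> x <= y.
Proof.
  intros Hx Hy H. destruct (Rle_or_lt x y) as [| Hyx]; [assumption |].
  pose proof (ln_increasing y x Hy Hyx). lra.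
Qed.

Lemma ex_derive_continuity_pt f x : ex_derive f x -> continuity_pt f x.
Proof. intros H. apply continuity_pt_filterlim. exact (ex_derive_continuous f x H). Qed.

Lemma IVT_interv_le f a b : a < b ->
  (forall x, a <= x <= b -> ex_derive f x) -> f a <= 0 <= f b ->
  exists c, a <= c <= b /\ f c = 0.
Proof.
  intros Hab Hf [[Ha | Ha] [Hb | Hb]].
  - destruct (IVT_interv f a b) as (c & Hc & Hfc); try lra.
    + intros x Hx. apply ex_derive_continuity_pt, Hf, Hx.
    + now exists c.
  - exists b; split; [lra | auto].
  - exists a; split; [lra | auto].
  - exists a; split; [lra | auto].
Qed.

(* [(r, θ)] encodes the root [z = - r e^(iθ)] of [charfun (- exp L) b];
   necessarily [θ = b Im z]. *)
Definition polar_root (L b r θ : R) : Prop :=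
  0 < r /\ θ = - b * r * sin θ /\ L + ln r + b * (1 + r * cos θ) = 0.

Lemma charfun_pair mu b x y :
  charfun mu b (x, y) =
  (1 - mu * exp (b * (1 - x)) * (x * cos (b * y) + y * sin (b * y)),
   - (mu * exp (b * (1 - x)) * (y * cos (b * y) - x * sin (b * y)))).
Proof.
  unfold charfun, Cexp, Cminus, Cmult, Cplus, Copp, RtoC; simpl.
  replace (b * (1 + - x) - 0 * (0 + - y)) with (b * (1 - x)) by ring.
  replace (b * (0 + - y) + 0 * (1 + - x)) with (- (b * y)) by ring.
  rewrite cos_neg, sin_neg.
  f_equal; ring.
Qed.

Lemma Cmod_polar r θ : 0 <= r -> Cmod (- r * cos θ, - r * sin θ) = r.
Proof.
  intros Hr; unfold Cmod; simpl.
  replace (_ * (_ * 1) + _ * (_ * 1))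
    with (r * r * (cos θ * cos θ + sin θ * sin θ)) by ring.
  rewrite cos_sqr_add_sin_sqr, Rmult_1_r.
  now apply sqrt_square.
Qed.

Lemma mul_exp_eq1 r u : 0 < r -> r * exp u = 1 <-> ln r + u = 0.
Proof.
  intros Hr. rewrite <- (exp_ln r) at 1 by exact Hr. rewrite <- exp_plus.
  split; intros H.
  - now rewrite <- (ln_exp (ln r + u)), H, ln_1.
  - now rewrite H, exp_0.
Qed.

Lemma charfun_polar L b r θ : θ = - b * r * sin θ ->
  charfun (- exp L) b (- r * cos θ, - r * sin θ)
  = (1 - r * exp (L + b * (1 + r * cos θ)), 0).
Proof.
  intros Hθ. rewrite charfun_pair.
  replace (b * (- r * sin θ)) with θ by lra.
  rewrite exp_plus.
  f_equal.
  - replace (1 - - r * cos θ) with (1 + r * cos θ) by ring.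
    replace (- r * cos θ * cos θ + - r * sin θ * sin θ)
      with (- r * (cos θ * cos θ + sin θ * sin θ)) by ring.
    rewrite cos_sqr_add_sin_sqr. ring.
  - ring.
Qed.

Lemma charfun_root_polar mu b x y : mu < 0 -> charfun mu b (x, y) = 0 ->
  exists r, 0 < r /\ x = - r * cos (b * y) /\ y = - r * sin (b * y).
Proof.
  intros Hmu Hz. rewrite charfun_pair in Hz.
  pose proof (f_equal fst Hz) as Hre. pose proof (f_equal snd Hz) as Him.
  simpl in Hre, Him.
  set (E := mu * exp (b * (1 - x))) in *.
  pose proof (cos_sqr_add_sin_sqr (b * y)) as Hcs.
  set (c := cos (b * y)) in *. set (s := sin (b * y)) in *.
  assert (HE : E < 0) by (apply Rmult_neg_pos; [exact Hmu | apply exp_pos]).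
  assert (Hrot : y * c - x * s = 0).
  { destruct (Rmult_integral E (y * c - x * s)); lra. }
  exists (- (x * c + y * s)). repeat split.
  - nra.
  - transitivity (x * (c * c + s * s) + s * (y * c - x * s));
      [rewrite Hcs, Hrot |]; ring.
  - transitivity (y * (c * c + s * s) - c * (y * c - x * s));
      [rewrite Hcs, Hrot |]; ring.
Qed.

Lemma Iset_polar L b :
  Iset (- exp L) b <-> forall r θ, polar_root L b r θ -> 1 < r.
Proof.
  split.
  - intros HI r θ (Hr & Hθ & Heq).
    rewrite <- (Cmod_polar r θ) by lra. apply HI.
    rewrite charfun_polar by exact Hθ.
    assert (Hone : r * exp (L + b * (1 + r * cos θ)) = 1)
      by (apply mul_exp_eq1; lra).
    rewrite Hone. unfold RtoC. f_equal; ring.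
  - intros Hpol [x y] Hz.
    assert (Hmu : - exp L < 0) by (pose proof (exp_pos L); lra).
    destruct (charfun_root_polar _ b x y Hmu Hz) as (r & Hr & Hx & Hy).
    set (θ := b * y) in *.
    assert (Hθ : θ = - b * r * sin θ) by (unfold θ at 1; rewrite Hy at 1; ring).
    rewrite Hx, Hy in Hz |- *. rewrite Cmod_polar by lra.
    rewrite charfun_polar in Hz by exact Hθ.
    pose proof (f_equal fst Hz) as Hre; simpl in Hre.
    apply (Hpol r θ). repeat split; [lra | exact Hθ |].
    replace (L + ln r + b * (1 + r * cos θ))
      with (ln r + (L + b * (1 + r * cos θ))) by ring.
    apply mul_exp_eq1; lra.
Qed.

Definition x_div_sin (x : R) : R := x / sin x.

(* [x (1 + cos x) / sin x = x cot (x / 2)] *)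
Definition x_cot_half (x : R) : R := x_div_sin x * (1 + cos x).

Lemma mul_cos_lt_sin x : 0 < x < PI -> x * cos x < sin x.
Proof.
  intros Hx.
  destruct (MVT_cor2 (fun u => sin u - u * cos u) (fun u => u * sin u) 0 x)
    as (c & Hmvt & Hc); [lra | |].
  - intros c _. apply is_derive_Reals. auto_derive; [exact I | ring].
  - rewrite sin_0, cos_0 in Hmvt.
    assert (0 < c * sin c * x)
      by (apply Rmult_lt_0_compat; [apply Rmult_lt_0_compat, sin_gt_0_lt_PI|]; lra).
    lra.
Qed.

Lemma x_div_sin_gt_1 x : 0 < x < PI -> 1 < x_div_sin x.
Proof.
  intros Hx. pose proof (sin_gt_0_lt_PI x Hx). pose proof (sin_lt_x x (proj1 Hx)).
  unfold x_div_sin. apply Rlt_div_r; lra.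
Qed.

Lemma x_div_sin_lt x y : 0 < x -> x < y -> y < PI -> x_div_sin x < x_div_sin y.
Proof.
  intros Hx Hxy Hy.
  apply (incr_function x_div_sin 0 PI (fun u => (sin u - u * cos u) / sin u ^ 2));
    simpl; try lra; intros u Hu0 HuPI; pose proof (sin_gt_0_lt_PI u (conj Hu0 HuPI)).
  - unfold x_div_sin. auto_derive; [lra | field; lra].
  - pose proof (mul_cos_lt_sin u (conj Hu0 HuPI)).
    apply Rdiv_lt_0_compat; nra.
Qed.

Lemma x_div_sin_le x y : 0 < x -> x <= y -> y < PI -> x_div_sin x <= x_div_sin y.
Proof.
  intros Hx [Hxy | ->] Hy; [left; apply x_div_sin_lt | right]; auto.
Qed.

Lemma x_cot_half_lt x y : 0 < x -> x < y -> y < PI -> x_cot_half y < x_cot_half x.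
Proof.
  intros Hx Hxy Hy.
  apply Ropp_lt_cancel.
  apply (incr_function (fun u => - x_cot_half u) 0 PI
           (fun u => (1 + cos u) * (u - sin u) / sin u ^ 2));
    simpl; try lra; intros u Hu0 HuPI; pose proof (sin_gt_0_lt_PI u (conj Hu0 HuPI)).
  - unfold x_cot_half, x_div_sin. auto_derive; [lra |].
    pose proof (sin2_cos2 u) as Hsc; unfold Rsqr in Hsc.
    field_simplify; [| lra | lra].
    replace (cos u * cos u) with (1 - sin u * sin u) by lra.
    f_equal. nra.
  - pose proof (sin_lt_x u Hu0).
    assert (cos u <> -1).
    { intros Hc. pose proof (sin2_cos2 u) as Hsc; unfold Rsqr in Hsc. nra. }
    pose proof (COS_bound u).
    apply Rdiv_lt_0_compat; nra.
Qed.

Lemma x_cot_half_le x y : 0 < x -> x <= y -> y < PI -> x_cot_half y <= x_cot_half x.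
Proof.
  intros Hx [Hxy | ->] Hy; [left; apply x_cot_half_lt | right]; auto.
Qed.

Lemma x_cot_half_surj L : 0 < L < 2 -> exists tau, 0 < tau < PI /\ x_cot_half tau = L.
Proof.
  intros HL. pose proof PI2_3_2.
  (* [tau = 2 a] with [2 a cos a = L sin a], by the half-angle formulas. *)
  set (a0 := (2 - L) / 2).
  assert (Ha0 : 0 < a0 < 1) by (unfold a0; lra).
  destruct (IVT_interv_le (fun a => L * sin a - 2 * a * cos a) a0 (PI / 2))
    as (a & Ha & Hroot).
  - lra.
  - intros a _. auto_derive. exact I.
  - rewrite sin_PI2, cos_PI2. split; [| lra].
    assert (sin a0 < a0) by (apply sin_lt_x; lra).
    assert (1 - a0 ^ 2 / 2 <= cos a0) by (apply cos_ge_1_sub_sqr_half; lra).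
    assert (L / 2 = 1 - a0) by (unfold a0; field).
    assert (a0 ^ 2 / 2 < a0) by nra.
    assert (L / 2 < cos a0) by lra.
    nra.
  - assert (Ha' : a < PI / 2).
    { destruct (Req_dec a (PI / 2)) as [-> | Hne]; [| lra].
      rewrite sin_PI2, cos_PI2 in Hroot. lra. }
    assert (Hcos : 0 < cos a) by (apply cos_gt_0; lra).
    assert (Hsin : 0 < sin a) by (apply sin_gt_0; lra).
    exists (2 * a). split; [lra |].
    unfold x_cot_half, x_div_sin. rewrite sin_2a, cos_2a_cos.
    assert (Heq : 2 * a * cos a = L * sin a) by lra.
    field_simplify; [| split; lra].
    replace (2 * a * cos a ^ 2) with (2 * a * cos a * cos a) by ring.
    rewrite Heq. field. split; lra.
Qed.

Lemma real_polar_root_exists L b : 0 < L -> - L / 2 <= b ->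
  exists r, r <= 1 /\ polar_root L b r 0.
Proof.
  intros HL Hb.
  set (r0 := exp (- (L + 2 * Rabs b + 1))).
  assert (Hr0 : 0 < r0 < 1).
  { split; [apply exp_pos |]. rewrite <- exp_0. apply exp_increasing.
    pose proof (Rabs_pos b). lra. }
  destruct (IVT_interv_le (fun r => L + ln r + b * (1 + r)) r0 1) as (r & Hr & Hroot).
  - lra.
  - intros r Hr. auto_derive. lra.
  - rewrite ln_1. split; [| lra].
    assert (Hln : ln r0 = - (L + 2 * Rabs b + 1)) by apply ln_exp.
    rewrite Hln. pose proof (Rle_abs b). pose proof (Rabs_pos b). nra.
  - exists r. split; [lra |]. repeat split; [lra | |].
    + rewrite sin_0. ring.
    + rewrite cos_0, Rmult_1_r. exact Hroot.
Qed.

Lemma complex_polar_root_exists L tau b : 0 < L -> 0 < tau < PI -> x_cot_half tau = L ->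
  b <= - x_div_sin tau -> exists r θ, r <= 1 /\ polar_root L b r θ.
Proof.
  intros HL Htau Hf Hb. unfold x_cot_half in Hf.
  set (beta := - b) in *.
  assert (Hbeta : x_div_sin tau <= beta) by (unfold beta; lra).
  pose proof (x_div_sin_gt_1 tau Htau) as Hrho_tau.
  (* For [t] in [(0, PI)], [(x_div_sin t / beta, t)] is a polar root iff [G t = 0];
     [G tau <= 0] as [x_div_sin tau <= beta], and [G] blows up at [PI]. *)
  set (G t := ln (x_div_sin t) - x_div_sin t * cos t - (beta + ln beta - L)).
  set (delta := Rmin (exp (- (beta + ln beta + 1))) ((PI - tau) / 2)).
  assert (Hdelta : 0 < delta <= (PI - tau) / 2).
  { split; [apply Rmin_pos; [apply exp_pos | lra] | apply Rmin_r]. }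
  pose proof PI2_3_2.
  destruct (IVT_interv_le G tau (PI - delta)) as (t & Ht & HGt).
  - lra.
  - intros t Ht. pose proof (sin_gt_0_lt_PI t ltac:(lra)).
    pose proof (x_div_sin_gt_1 t ltac:(lra)) as Hpos. unfold x_div_sin, Rdiv in Hpos.
    unfold G, x_div_sin. auto_derive. repeat split; lra.
  - split.
    + unfold G. rewrite <- Hf.
      pose proof (plus_ln_le_compat (x_div_sin tau) beta ltac:(lra) ltac:(lra)). lra.
    + unfold G, x_div_sin. rewrite sin_PI_x, Rtrigo_facts.cos_pi_minus.
      pose proof (sin_gt_0_lt_PI delta ltac:(lra)).
      pose proof (sin_lt_x delta ltac:(lra)).
      pose proof (cos_ge_0 delta ltac:(lra) ltac:(lra)).
      assert (Hlarge : 1 / delta < (PI - delta) / sin delta).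
      { apply (Rlt_le_trans _ (1 / sin delta)).
        - apply Rmult_lt_compat_l; [lra |]. apply Rinv_lt_contravar; nra.
        - apply Rmult_le_compat_r; [left; apply Rinv_0_lt_compat |]; lra. }
      assert (Hln_large : beta + ln beta + 1 <= ln (1 / delta)).
      { assert (ln delta <= - (beta + ln beta + 1)).
        { rewrite <- (ln_exp (- (beta + ln beta + 1))).
          apply ln_le; [lra | apply Rmin_l]. }
        rewrite ln_div, ln_1 by lra. lra. }
      pose proof (ln_increasing (1 / delta) _ ltac:(apply Rdiv_lt_0_compat; lra) Hlarge).
      assert (0 < (PI - delta) / sin delta) by (apply Rdiv_lt_0_compat; lra).
      nra.
  - assert (Ht' : 0 < t < PI) by lra.
    pose proof (sin_gt_0_lt_PI t Ht').
    pose proof (x_div_sin_gt_1 t Ht').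
    set (rho := x_div_sin t) in *.
    assert (Hrho_beta : rho <= beta).
    { apply plus_ln_le_reg; [lra | lra |].
      pose proof (x_cot_half_le tau t ltac:(lra) ltac:(lra) ltac:(lra)) as Hle.
      unfold x_cot_half, G in Hle, HGt. fold rho in Hle, HGt. lra. }
    exists (rho / beta), t. split; [apply (Rdiv_le_1 rho beta); lra |].
    repeat split.
    + apply Rdiv_lt_0_compat; lra.
    + unfold beta, rho, x_div_sin. field. lra.
    + rewrite ln_div by lra. unfold G in HGt. fold rho in HGt.
      replace (b * (1 + rho / beta * cos t)) with (- beta - rho * cos t)
        by (unfold beta; field; lra).
      lra.
Qed.

Lemma real_polar_eq_lt_0 L b r : L < 2 -> b < - L / 2 -> 0 < r <= 1 ->
  L + ln r + b * (1 + r) < 0.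
Proof.
  intros HL Hb Hr.
  pose proof (ln_le_sub_1 r (proj1 Hr)).
  destruct (Rle_or_lt (-1) b) as [Hb1 | Hb1].
  - nra.
  - assert (Hln : ln r = ln (- b * r) - ln (- b)) by (rewrite ln_mult; lra).
    pose proof (ln_le_sub_1 (- b * r) ltac:(nra)).
    assert (0 < ln (- b)) by (rewrite <- ln_1; apply ln_increasing; lra).
    nra.
Qed.

Lemma polar_root_opp L b r θ : polar_root L b r θ -> polar_root L b r (- θ).
Proof.
  intros (Hr & Hθ & Heq). repeat split; [exact Hr | |].
  - rewrite sin_neg. lra.
  - rewrite cos_neg. exact Heq.
Qed.

Lemma complex_polar_root_outside L tau b r θ : 0 < tau < PI -> x_cot_half tau = L ->
  - x_div_sin tau < b < 0 -> 0 < θ -> polar_root L b r θ -> 1 < r.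
Proof.
  intros Htau Hf Hb Hθ0 (Hr & Hθ & Heq).
  apply Rnot_le_lt. intros Hr1.
  set (beta := - b) in *.
  set (rho := beta * r).
  assert (Hrho : 0 < rho <= beta) by (unfold rho, beta; nra).
  assert (Hsin : 0 < sin θ) by (unfold rho, beta in *; nra).
  destruct (sin_pos_reduce θ Hθ0 Hsin) as (t & Ht & Htθ & Hsint & Hcost).
  pose proof (sin_gt_0_lt_PI t Ht).
  assert (Hrho_t : x_div_sin t <= rho).
  { apply Rle_div_l; [lra |]. rewrite Hsint. unfold rho, beta in *. lra. }
  assert (Httau : t < tau).
  { apply Rnot_le_lt. intros Hle.
    pose proof (x_div_sin_le tau t ltac:(lra) Hle ltac:(lra)). unfold beta in *. lra. }
  pose proof (x_cot_half_lt t tau ltac:(lra) Httau ltac:(lra)) as HLt.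
  assert (Hcot : x_cot_half t <= rho * (1 + cos t)).
  { apply Rmult_le_compat_r; [pose proof (COS_bound t); lra | exact Hrho_t]. }
  assert (Hln : ln r = ln rho - ln beta) by (unfold rho; rewrite ln_mult; lra).
  assert (HL : L = beta + ln beta - ln rho + rho * cos t).
  { rewrite Hln, <- Hcost in Heq. unfold rho, beta in *. lra. }
  pose proof (plus_ln_le_compat rho beta ltac:(lra) ltac:(lra)).
  rewrite Hf in HLt. lra.
Qed.

Lemma polar_root_outside L tau b r θ : 0 < L < 2 -> 0 < tau < PI -> x_cot_half tau = L ->
  - x_div_sin tau < b < - L / 2 -> polar_root L b r θ -> 1 < r.
Proof.
  intros HL Htau Hf Hb Hroot.
  destruct (total_order_T θ 0) as [[Hθ | ->] | Hθ].
  - apply (complex_polar_root_outside L tau b r (- θ)); try lra.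
    now apply polar_root_opp.
  - destruct Hroot as (Hr & _ & Heq). rewrite cos_0, Rmult_1_r in Heq.
    apply Rnot_le_lt. intros Hr1.
    pose proof (real_polar_eq_lt_0 L b r ltac:(lra) ltac:(lra) ltac:(lra)). lra.
  - apply (complex_polar_root_outside L tau b r θ); lra || assumption.
Qed.

Theorem Iset_iff_interval L tau : 0 < L < 2 -> 0 < tau < PI -> x_cot_half tau = L ->
  forall b, Iset (- exp L) b <-> - x_div_sin tau < b < - L / 2.
Proof.
  intros HL Htau Hf b. rewrite Iset_polar. split.
  - intros Hout. split; apply Rnot_le_lt; intros Hb.
    + destruct (complex_polar_root_exists L tau b ltac:(lra) Htau Hf Hb)
        as (r & θ & Hr & Hroot).
      pose proof (Hout r θ Hroot). lra.
    + destruct (real_polar_root_exists L b ltac:(lra) Hb) as (r & Hr & Hroot).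
      pose proof (Hout r 0 Hroot). lra.
  - intros Hb r θ. apply (polar_root_outside L tau); assumption.
Qed.

Lemma neg_exp_param mu : - exp 2 < mu < -1 -> exists L, 0 < L < 2 /\ mu = - exp L.
Proof.
  intros Hmu. exists (ln (- mu)). rewrite exp_ln by lra. split; [split | ring].
  - rewrite <- ln_1. apply ln_increasing; lra.
  - rewrite <- (ln_exp 2). apply ln_increasing; lra.
Qed.

Theorem corollary5p4 :
  (forall mu : R, - exp 2 < mu < -1 ->
     nonempty_open_interval (Iset mu) /\ (forall b, Iset mu b -> b < 0)) /\
  (forall mu1 mu2 : R, - exp 2 < mu1 -> mu1 < mu2 -> mu2 < -1 ->
     forall b, Iset mu1 b -> Iset mu2 b).
Proof.
  split.
  - intros mu Hmu. destruct (neg_exp_param mu Hmu) as (L & HL & ->).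
    destruct (x_cot_half_surj L HL) as (tau & Htau & Hf).
    pose proof (Iset_iff_interval L tau HL Htau Hf) as Hchar.
    pose proof (x_div_sin_gt_1 tau Htau).
    split.
    + exists (Finite (- x_div_sin tau)), (Finite (- L / 2)). simpl.
      split; [lra | exact Hchar].
    + intros b Hb. apply Hchar in Hb. lra.
  - intros mu1 mu2 H1 H12 H2 b.
    destruct (neg_exp_param mu1 ltac:(lra)) as (L1 & HL1 & ->).
    destruct (neg_exp_param mu2 ltac:(lra)) as (L2 & HL2 & ->).
    assert (HL12 : L2 < L1) by (apply exp_lt_inv; lra).
    destruct (x_cot_half_surj L1 HL1) as (tau1 & Htau1 & Hf1).
    destruct (x_cot_half_surj L2 HL2) as (tau2 & Htau2 & Hf2).
    assert (Htau12 : tau1 <= tau2).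
    { apply Rnot_lt_le. intros Hlt.
      pose proof (x_cot_half_lt tau2 tau1 ltac:(lra) Hlt ltac:(lra)). lra. }
    pose proof (x_div_sin_le tau1 tau2 ltac:(lra) Htau12 ltac:(lra)).
    rewrite (Iset_iff_interval L1 tau1 HL1 Htau1 Hf1), (Iset_iff_interval L2 tau2 HL2 Htau2 Hf2).
    lra.
Qed.
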